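(* Under the setting of the context, assume (TS1). Let $u$ be the solution of problem (P). Then (i) $\lim_{t\to\infty,\,t\in\mathbb{T}}u(0,t)=0$ and (ii) $\int_0^\infty u(0,t)\,\Delta t=\frac{A\mu_x}{k}$.
   Context: A time scale $\mathbb{T}$ is a nonempty closed subset of $\mathbb{R}$; here $\min\mathbb{T}=0$ and $\sup\mathbb{T}=+\infty$. $\sigma(t)=\inf\{s\in\mathbb{T}:s>t\}$ is the forward jump and $\mu_t(t)=\sigma(t)-t$ the graininess; $u^{\Delta_t}$ denotes the (Hilger) delta derivative in $t$ (the ordinary derivative at right-dense points, $(u(x,\sigma(t))-u(x,t))/\mu_t(t)$ at right-scattered points), and $\int\cdot\,\Delta t$ the delta integral, with $\int_0^\infty=\lim_{T\to\infty}\int_0^T$. For $p$ with $1+p\mu_t(t)\ne0$, $e_p(t,s)$ is the time-scale exponential, i.e. the solution of $y^{\Delta}=py$, $y(s)=1$. Fix $A>0$, $k>0$, $\mu_x>0$, $\Omega=\mu_x\mathbb{Z}\times\mathbb{T}$. Problem (P): $u^{\Delta_t}(x,t)+k\frac{u(x,t)-u(x-\mu_x,t)}{\mu_x}=0$ for $(x,t)\in\Omega$, $u(0,0)=A$, $u(x,0)=0$ for $x\ne0$. A solution is $u:\Omega\to\mathbb{R}$ with each $u(x,\cdot)$ delta differentiable on $\mathbb{T}$, satisfying (P), and bounded on $\mu_x\mathbb{Z}\times(\mathbb{T}\cap[0,T_0])$ for every $T_0>0$. Condition (TS1): $1-\frac{k\mu_t(t)}{\mu_x}>0$ for all $t\in\mathbb{T}$.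 *)

From Stdlib Require Import Reals Lra ZArith Classical ClassicalEpsilon.
From Stdlib Require Export Rtopology.
Open Scope R_scope.

Definition time_scale0 (T : R -> Prop) : Prop :=
  closed_set T /\ T 0 /\ (forall t, T t -> 0 <= t) /\
  (forall M, exists t, T t /\ M < t).

Definition is_inf (E : R -> Prop) (m : R) : Prop :=
  (forall x, E x -> m <= x) /\ (forall b, (forall x, E x -> b <= x) -> b <= m).

(** Forward jump sigma(t) = inf { s in T | s > t } (chosen by epsilon;
    it exists and is unique whenever T is unbounded above). *)
Definition sigma (T : R -> Prop) (t : R) : R :=
  epsilon (inhabits 0) (fun m => is_inf (fun s => T s /\ t < s) m).

Definition mu_t (T : R -> Prop) (t : R) : R := sigma T t - t.

Definition delta_deriv (T : R -> Prop) (f : R -> R) (t d : R) : Prop :=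
  forall eps, 0 < eps -> exists del, 0 < del /\
    forall s, T s -> Rabs (t - s) < del ->
      Rabs (f (sigma T t) - f s - d * (sigma T t - s))
        <= eps * Rabs (sigma T t - s).

(** F is a delta antiderivative of g on T (T has no maximum, so T^kappa = T). *)
Definition delta_antiderivative (T : R -> Prop) (F g : R -> R) : Prop :=
  forall t, T t -> delta_deriv T F t (g t).

Definition lim_infty_T (T : R -> Prop) (f : R -> R) (l : R) : Prop :=
  forall eps, 0 < eps -> exists M, forall t, T t -> M < t -> Rabs (f t - l) < eps.

Definition delta_integral_0_infty (T : R -> Prop) (g : R -> R) (l : R) : Prop :=
  (exists F, delta_antiderivative T F g) /\
  (forall F, delta_antiderivative T F g ->
     lim_infty_T T (fun b => F b - F 0) l).

(** Solutions of problem (P); the point x = mux * n of mux Z is encoded by n : Z. *)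
Definition solves_P (T : R -> Prop) (A k mux : R) (u : Z -> R -> R) : Prop :=
  (exists ud : Z -> R -> R,
     forall n t, T t ->
       delta_deriv T (u n) t (ud n t) /\
       ud n t + k * (u n t - u (n - 1)%Z t) / mux = 0) /\
  u 0%Z 0 = A /\
  (forall n, n <> 0%Z -> u n 0 = 0) /\
  (forall T0, 0 < T0 -> exists B, forall n t, T t -> t <= T0 -> Rabs (u n t) <= B).

Definition TS1 (T : R -> Prop) (k mux : R) : Prop :=
  forall t, T t -> 1 - k * mu_t T t / mux > 0.

From Stdlib Require Import Reals ZArith Lra Lia Classical ClassicalEpsilon.
(* Imported last so that [Defs.sigma] (forward jump) shadows the finite sum
   [Rsigma.sigma] of the standard library. *)
From Pilot Require Import Defs.
Open Scope R_scope.

(** On the lattice [mux Z] the scheme reads [u_n^Delta = - c (u_n - u_(n-1))]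
    with [c = k / mux].  The proof has three layers.

    1. Time-scale calculus.  A sound induction principle over a time scale
       (right-scattered steps, right-dense and left-dense points) yields a
       comparison principle: a delta-differentiable [f] stays below a
       continuous [g] as soon as [g] wins at every jump and is a strict
       supersolution at right-dense contact points.  Two consequences: a
       function with zero delta derivative is constant, and the iterated
       bound [|w'| <= B (ct)^j/j!  ==>  |w| <= B (ct)^(j+1)/(j+1)!].
    2. Since [u_n(0) = 0] for [n < 0] and the solution is locally bounded,
       iterating that bound gives [u_n = 0] for [n < 0]; hence [v = u_0]
       solves [v^Delta = - c v] with [v(0) = A].
    3. Under (TS1), comparison gives [0 <= v t <= A / (1 + c t / 2)], so
       [v -> 0]; and [- v / c] is a delta antiderivative of [v], so every
       antiderivative [F] satisfies [F b - F 0 = (A - v b) / c -> A / c]. *)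

Lemma inf_exists (E : R -> Prop) :
  (exists x, E x) -> (exists b, forall x, E x -> b <= x) -> exists m, is_inf E m.
Proof.
  intros [x Ex] [b Hb].
  destruct (completeness (fun y => E (- y))) as [m [Hub Hleast]].
  - exists (- b). intros y Ey. specialize (Hb _ Ey). lra.
  - exists (- x). rewrite Ropp_involutive. exact Ex.
  - unfold is_upper_bound in Hub. exists (- m). split.
    + intros y Ey. assert (H := Hub (- y)). rewrite Ropp_involutive in H.
      specialize (H Ey). lra.
    + intros c Hc. assert (m <= - c).
      { apply Hleast. intros y Ey. specialize (Hc _ Ey). lra. }
      lra.
Qed.

Lemma inf_unique E m1 m2 : is_inf E m1 -> is_inf E m2 -> m1 = m2.
Proof.
  intros [A1 B1] [A2 B2]. apply Rle_antisym; [apply B2 | apply B1]; assumption.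
Qed.

Lemma inf_approx E m : is_inf E m -> forall d, 0 < d -> exists s, E s /\ s < m + d.
Proof.
  intros [Hlow Hgreat] d Hd. apply NNPP. intro Hn.
  assert (m + d <= m).
  { apply Hgreat. intros x Ex. apply Rnot_lt_le. intro Hx. apply Hn. exists x. tauto. }
  lra.
Qed.

Lemma closure_in (T : R -> Prop) m : closed_set T ->
  (forall d, 0 < d -> exists s, T s /\ Rabs (s - m) < d) -> T m.
Proof.
  intros Hc Hadh. apply NNPP. intro Hn.
  destruct (Hc m Hn) as [[d Hd] Hinc].
  destruct (Hadh d Hd) as [s [Ts Hs]].
  apply (Hinc s). unfold disc. simpl. exact Hs. exact Ts.
Qed.

Lemma closed_inf_mem (T P : R -> Prop) m : closed_set T ->
  is_inf (fun s => T s /\ P s) m -> T m.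
Proof.
  intros Hc Hm. apply (closure_in T m Hc). intros d Hd.
  destruct (inf_approx _ _ Hm d Hd) as [s [Hs_in Hs]].
  exists s. split; [exact (proj1 Hs_in)|].
  assert (m <= s) by exact (proj1 Hm s Hs_in).
  rewrite Rabs_right; lra.
Qed.

Section TimeScale.

Variable T : R -> Prop.
Hypothesis HT : time_scale0 T.

Lemma sigma_spec t : is_inf (fun s => T s /\ t < s) (sigma T t).
Proof.
  destruct HT as [_ [_ [_ Hunb]]]. unfold sigma. apply epsilon_spec, inf_exists.
  - destruct (Hunb t) as [s Hs]. exists s. exact Hs.
  - exists t. intros x [_ Hx]. lra.
Qed.

Lemma sigma_ge t : t <= sigma T t.
Proof. apply (proj2 (sigma_spec t)). intros x [_ Hx]. lra. Qed.

Lemma sigma_next t s : T s -> t < s -> sigma T t <= s.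
Proof. intros Ts Hs. apply (proj1 (sigma_spec t)). tauto. Qed.

Lemma left_isolated_jump t : T t -> 0 < t ->
  ~ (forall e, 0 < e -> exists s, T s /\ t - e < s < t) ->
  exists r, T r /\ r < t /\ sigma T r = t.
Proof.
  intros Tt Ht Hnot.
  destruct HT as [Hc [T0 _]].
  apply not_all_ex_not in Hnot. destruct Hnot as [e He].
  apply imply_to_and in He. destruct He as [He Hgap].
  assert (Hbelow : forall s, T s -> s < t -> s <= t - e).
  { intros s Ts Hs. apply Rnot_lt_le. intro Hs2. apply Hgap. exists s. split; [exact Ts|lra]. }
  destruct (completeness (fun s => T s /\ s < t)) as [r [Hub Hleast]].
  { exists t. intros x [_ Hx]. lra. }
  { exists 0. split; assumption. }
  assert (Hrle : r <= t - e).
  { apply Hleast. intros x [Tx Hx]. apply Hbelow; assumption. }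
  assert (Tr : T r).
  { apply (closure_in T r Hc). intros d Hd. apply NNPP. intro Hn.
    assert (r <= r - d).
    { apply Hleast. intros x [Tx Hx]. apply Rnot_lt_le. intro Hx2. apply Hn. exists x.
      split; [exact Tx|]. assert (x <= r) by (apply Hub; tauto). rewrite Rabs_left1; lra. }
    lra. }
  exists r. repeat split; [exact Tr | lra |].
  apply (inf_unique (fun s => T s /\ r < s)); [apply sigma_spec | split].
  - intros s [Ts Hs]. apply Rnot_lt_le. intro Hst.
    assert (s <= r) by (apply Hub; tauto). lra.
  - intros b Hb. apply Hb. split; [exact Tt | lra].
Qed.

(** Proof: the least
    counterexample would contradict one of the three propagation rules. *)
Lemma ts_induction (P : R -> Prop) :
  P 0 ->
  (forall t, T t -> t < sigma T t -> P t -> P (sigma T t)) ->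
  (forall t, T t -> sigma T t = t -> P t ->
      exists d, 0 < d /\ forall s, T s -> t < s < t + d -> P s) ->
  (forall t, T t -> 0 < t -> (forall e, 0 < e -> exists s, T s /\ t - e < s < t) ->
      (forall s, T s -> s < t -> P s) -> P t) ->
  forall t, T t -> P t.
Proof.
  intros P0 Hjump Hright Hleft t0 Tt0. apply NNPP. intro Hn0.
  destruct HT as [Hc [T0 [Hpos _]]].
  destruct (inf_exists (fun t => T t /\ ~ P t)) as [m Hm].
  { exists t0. tauto. }
  { exists 0. intros x [Tx _]. apply Hpos; exact Tx. }
  assert (Tm : T m) by exact (closed_inf_mem T _ m Hc Hm).
  assert (Hbefore : forall s, T s -> s < m -> P s).
  { intros s Ts Hs. apply NNPP. intro Hns.
    assert (m <= s) by (apply (proj1 Hm); tauto). lra. }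
  destruct (classic (P m)) as [Pm | nPm].
  - (* [P] holds on a right neighbourhood of [m], contradicting minimality *)
    assert (Hnbhd : exists d, 0 < d /\ forall s, T s -> m < s < m + d -> P s).
    { destruct (Req_dec (sigma T m) m) as [Heq | Hne].
      - apply Hright; assumption.
      - pose proof (sigma_ge m). exists (sigma T m - m). split; [lra|].
        intros s Ts Hs. pose proof (sigma_next m s Ts (proj1 Hs)). lra. }
    destruct Hnbhd as [d [Hd Hds]].
    destruct (inf_approx _ _ Hm d Hd) as [b [[Tb Pb] Hb]].
    assert (m <= b) by (apply (proj1 Hm); tauto).
    destruct (Req_dec b m) as [-> | Hbm]; [contradiction|].
    apply Pb. apply Hds; [exact Tb | lra].
  - assert (Hm0 : 0 < m).
    { pose proof (Hpos m Tm). destruct (Req_dec m 0) as [->|]; [contradiction|lra]. }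
    destruct (classic (forall e, 0 < e -> exists s, T s /\ m - e < s < m)) as [Hl | Hnl].
    + apply nPm. apply Hleft; assumption.
    + destruct (left_isolated_jump m Tm Hm0 Hnl) as [r [Tr [Hrm Hsr]]].
      apply nPm. rewrite <- Hsr. apply Hjump; [exact Tr | lra |].
      apply Hbefore; [exact Tr | exact Hrm].
Qed.

End TimeScale.

(** ** Delta derivatives *)

(** [x / (x + 1) < 1] for [x >= 0]; used to absorb a norm into an epsilon. *)
Lemma frac_lt1 x : 0 <= x -> x / (x + 1) < 1.
Proof.
  intro Hx. replace (x / (x + 1)) with (1 - 1 / (x + 1)) by (field; lra).
  assert (0 < 1 / (x + 1)) by (apply Rdiv_lt_0_compat; lra). lra.
Qed.

Section DeltaCalculus.

Variable T : R -> Prop.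

Lemma dd_scattered f t d : T t -> delta_deriv T f t d -> t < sigma T t ->
  f (sigma T t) = f t + (sigma T t - t) * d.
Proof.
  intros Tt Hd Hlt.
  set (x := f (sigma T t) - f t - d * (sigma T t - t)).
  assert (Hx0 : x = 0).
  { apply NNPP. intro Hx. assert (Hax : 0 < Rabs x) by (apply Rabs_pos_lt; exact Hx).
    set (m := sigma T t - t). assert (Hm0 : 0 < m) by (unfold m; lra).
    destruct (Hd (Rabs x / (2 * m))) as [del [Hdel H]].
    { apply Rdiv_lt_0_compat; lra. }
    specialize (H t Tt). rewrite Rminus_diag, Rabs_R0 in H. specialize (H Hdel).
    fold x in H. rewrite (Rabs_right (sigma T t - t)) in H by lra. fold m in H.
    assert (Rabs x / (2 * m) * m = Rabs x / 2) by (field; lra). lra. }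
  unfold x in Hx0. lra.
Qed.

Lemma dd_cont f t d : T t -> delta_deriv T f t d ->
  forall e, 0 < e -> exists del, 0 < del /\
    forall s, T s -> Rabs (s - t) < del -> Rabs (f s - f t) < e.
Proof.
  intros Tt Hd e He.
  set (mu := Rabs (sigma T t - t)).
  set (e1 := e / (4 * (mu + 1))).
  assert (Hmu : 0 <= mu) by apply Rabs_pos.
  assert (He1 : 0 < e1) by (unfold e1; apply Rdiv_lt_0_compat; lra).
  assert (Hd0 : 0 <= Rabs d) by apply Rabs_pos.
  set (e2 := e / (4 * (Rabs d + 1))).
  assert (He2 : 0 < e2) by (unfold e2; apply Rdiv_lt_0_compat; lra).
  destruct (Hd e1 He1) as [del [Hdel H]].
  exists (Rmin del (Rmin 1 e2)). split.
  { apply Rmin_pos; [lra | apply Rmin_pos; lra]. }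
  intros s Ts Hs.
  pose proof (Rmin_l del (Rmin 1 e2)). pose proof (Rmin_r del (Rmin 1 e2)).
  pose proof (Rmin_l 1 e2). pose proof (Rmin_r 1 e2).
  assert (Hs1 : Rabs (s - t) < del) by lra.
  assert (Hs3 : Rabs (s - t) < e2) by lra.
  assert (Es := H s Ts). rewrite Rabs_minus_sym in Es. specialize (Es Hs1).
  assert (Et := H t Tt). rewrite Rminus_diag, Rabs_R0 in Et. specialize (Et Hdel).
  fold mu in Et.
  assert (Hsig : Rabs (sigma T t - s) <= mu + Rabs (s - t)).
  { replace (sigma T t - s) with ((sigma T t - t) - (s - t)) by ring.
    eapply Rle_trans; [apply Rabs_triang|]. rewrite Rabs_Ropp. unfold mu. lra. }
  (* [f s - f t] = linear part + two first-order remainders *)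
  replace (f s - f t) with (d * (s - t) - (f (sigma T t) - f s - d * (sigma T t - s))
                             + (f (sigma T t) - f t - d * (sigma T t - t))) by ring.
  eapply Rle_lt_trans; [apply Rabs_triang|].
  eapply Rle_lt_trans; [apply Rplus_le_compat_r; apply Rabs_triang|].
  rewrite Rabs_Ropp, Rabs_mult.
  assert (A1 : Rabs d * Rabs (s - t) <= Rabs d * e2) by (apply Rmult_le_compat_l; lra).
  assert (A2 : Rabs d * e2 < e / 4).
  { replace (Rabs d * e2) with (e / 4 * (Rabs d / (Rabs d + 1))) by (unfold e2; field; lra).
    pose proof (frac_lt1 (Rabs d) Hd0). nra. }
  assert (A3 : e1 * Rabs (sigma T t - s) <= e1 * (mu + 1)) by (apply Rmult_le_compat_l; lra).
  assert (A5 : e1 * (mu + 1) = e / 4) by (unfold e1; field; lra).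
  nra.
Qed.

Lemma dd_scal f t d a : delta_deriv T f t d -> delta_deriv T (fun x => a * f x) t (a * d).
Proof.
  intros Hd e He.
  assert (Ha : 0 <= Rabs a) by apply Rabs_pos.
  destruct (Hd (e / (Rabs a + 1))) as [del [Hdel H]]. { apply Rdiv_lt_0_compat; lra. }
  exists del. split; [exact Hdel|]. intros s Ts Hs.
  replace (a * f (sigma T t) - a * f s - a * d * (sigma T t - s))
    with (a * (f (sigma T t) - f s - d * (sigma T t - s))) by ring.
  rewrite Rabs_mult. specialize (H s Ts Hs).
  assert (Hp : 0 <= Rabs (sigma T t - s)) by apply Rabs_pos.
  assert (Rabs a * Rabs (f (sigma T t) - f s - d * (sigma T t - s))
          <= Rabs a * (e / (Rabs a + 1) * Rabs (sigma T t - s))) by (apply Rmult_le_compat_l; lra).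
  assert (Rabs a * (e / (Rabs a + 1)) <= e).
  { replace (Rabs a * (e / (Rabs a + 1))) with (e * (Rabs a / (Rabs a + 1))) by (field; lra).
    pose proof (frac_lt1 (Rabs a) Ha). nra. }
  nra.
Qed.

Lemma dd_minus f g t d1 d2 : delta_deriv T f t d1 -> delta_deriv T g t d2 ->
  delta_deriv T (fun x => f x - g x) t (d1 - d2).
Proof.
  intros H1 H2 e He.
  destruct (H1 (e / 2)) as [del1 [Hd1 K1]]; [lra|].
  destruct (H2 (e / 2)) as [del2 [Hd2 K2]]; [lra|].
  exists (Rmin del1 del2). split; [apply Rmin_pos; lra|]. intros s Ts Hs.
  specialize (K1 s Ts (Rlt_le_trans _ _ _ Hs (Rmin_l _ _))).
  specialize (K2 s Ts (Rlt_le_trans _ _ _ Hs (Rmin_r _ _))).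
  replace (f (sigma T t) - g (sigma T t) - (f s - g s) - (d1 - d2) * (sigma T t - s))
    with ((f (sigma T t) - f s - d1 * (sigma T t - s))
          - (g (sigma T t) - g s - d2 * (sigma T t - s))) by ring.
  eapply Rle_trans; [apply Rabs_triang|]. rewrite Rabs_Ropp. lra.
Qed.

Lemma values_near f df g t : T t -> delta_deriv T f t df -> continuity_pt g t ->
  forall e, 0 < e -> exists d, 0 < d /\ forall s, T s -> Rabs (s - t) < d ->
    Rabs (f s - f t) < e /\ Rabs (g s - g t) < e.
Proof.
  intros Tt Hd Hg e He.
  destruct (dd_cont f t df Tt Hd e He) as [d1 [Hd1 K1]].
  destruct (Hg e He) as [d2 [Hd2 K2]].
  exists (Rmin d1 d2). split; [apply Rmin_pos; lra|]. intros s Ts Hs.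
  split; [exact (K1 s Ts (Rlt_le_trans _ _ _ Hs (Rmin_l _ _)))|].
  destruct (Req_dec s t) as [-> | Hne]; [rewrite Rminus_diag, Rabs_R0; exact He|].
  apply (K2 s). split; [split; [exact I | congruence]|].
  exact (Rlt_le_trans _ _ _ Hs (Rmin_r _ _)).
Qed.

End DeltaCalculus.

(** ** Comparison principle *)

Section Comparison.

Variable T : R -> Prop.
Hypothesis HT : time_scale0 T.

Lemma barrier f df g T0 :
  (forall t, T t -> delta_deriv T f t (df t)) ->
  (forall t, T t -> continuity_pt g t) ->
  f 0 <= g 0 ->
  (forall t, T t -> t < sigma T t -> sigma T t <= T0 -> f t <= g t ->
     f (sigma T t) <= g (sigma T t)) ->
  (forall t, T t -> sigma T t = t -> t < T0 -> f t = g t ->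
     exists a, df t < a /\ exists d, 0 < d /\
       forall s, t < s < t + d -> a * (s - t) <= g s - g t) ->
  forall t, T t -> t <= T0 -> f t <= g t.
Proof.
  intros Hd Hg H0 Hjump Hcontact.
  apply (ts_induction T HT (fun t => t <= T0 -> f t <= g t)).
  - intros _. exact H0.
  - intros t Tt Hlt IH Hle. apply Hjump; try assumption. apply IH. lra.
  - intros t Tt Hs IH.
    destruct (Rlt_le_dec t T0) as [HtT | HtT].
    2: { exists 1. split; [lra|]. intros s _ Hs2 Hs3. lra. }
    destruct (Rle_lt_or_eq_dec _ _ (IH (Rlt_le _ _ HtT))) as [Hlt | Heq].
    + destruct (values_near T f (df t) g t Tt (Hd t Tt) (Hg t Tt) ((g t - f t) / 2))
        as [d [Hd0 K]]; [lra|].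
      exists d. split; [exact Hd0|]. intros s Ts Hs2 _.
      destruct (K s Ts) as [K1 K2]; [rewrite Rabs_right; lra|].
      apply Rabs_def2 in K1. apply Rabs_def2 in K2. lra.
    + (* contact point: compare the slopes of [f] and [g] to the right of [t] *)
      destruct (Hcontact t Tt Hs HtT Heq) as [a [Ha [d1 [Hd1 K1]]]].
      destruct (Hd t Tt ((a - df t) / 2)) as [d2 [Hd2 K2]]; [lra|].
      exists (Rmin d1 d2). split; [apply Rmin_pos; lra|]. intros s Ts Hs2 _.
      assert (Hsd1 : s < t + d1) by (pose proof (Rmin_l d1 d2); lra).
      specialize (K1 s (conj (proj1 Hs2) Hsd1)).
      assert (Hsa : Rabs (t - s) < d2).
      { rewrite Rabs_left; [|lra]. pose proof (Rmin_r d1 d2). lra. }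
      specialize (K2 s Ts Hsa). rewrite Hs in K2.
      rewrite (Rabs_left (t - s)) in K2 by lra.
      pose proof (Rle_abs (- (f t - f s - df t * (t - s)))) as K3. rewrite Rabs_Ropp in K3.
      nra.
  - intros t Tt Ht0 Hl IH Hle.
    apply Rnot_lt_le. intro Hgt.
    destruct (values_near T f (df t) g t Tt (Hd t Tt) (Hg t Tt) ((f t - g t) / 2))
      as [d [Hd0 K]]; [lra|].
    destruct (Hl d Hd0) as [s [Ts Hs]].
    destruct (K s Ts) as [K1 K2]; [rewrite Rabs_left; lra|].
    assert (f s <= g s) by (apply IH; [exact Ts | lra | lra]).
    apply Rabs_def2 in K1. apply Rabs_def2 in K2. lra.
Qed.

End Comparison.

Section ComparisonConsequences.

Variable T : R -> Prop.
Hypothesis HT : time_scale0 T.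

(** A function with zero delta derivative never exceeds its initial value:
    compare it with the lines [H 0 + eps (1 + s) / (1 + t)]. *)
Lemma const_le H :
  (forall t, T t -> delta_deriv T H t 0) -> forall t, T t -> H t <= H 0.
Proof.
  intros Hd t Tt.
  pose proof HT as [_ [_ [Hpos _]]].
  pose proof (Hpos t Tt) as Ht0.
  apply Rle_plus_epsilon. intros eps Heps.
  set (slope := eps / (1 + t)).
  assert (Hslope : 0 < slope) by (unfold slope; apply Rdiv_lt_0_compat; lra).
  assert (K : H t <= H 0 + slope * (1 + t)).
  { apply (barrier T HT H (fun _ => 0) (fun s => H 0 + slope * (1 + s)) t Hd);
      try assumption.
    - intros s _. reg.
    - lra.
    - intros s Ts Hlt _ Hs.
      rewrite (dd_scattered T H s 0 Ts (Hd s Ts) Hlt).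
      assert (slope * (1 + s) <= slope * (1 + sigma T s)) by (apply Rmult_le_compat_l; lra).
      lra.
    - intros s _ _ _ _. exists slope. split; [exact Hslope|].
      exists 1. split; [lra|]. intros r _. lra.
    - lra. }
  replace (slope * (1 + t)) with eps in K by (unfold slope; field; lra). exact K.
Qed.

Lemma const_eq H :
  (forall t, T t -> delta_deriv T H t 0) -> forall t, T t -> H t = H 0.
Proof.
  intros Hd t Tt. apply Rle_antisym; [exact (const_le H Hd t Tt)|].
  assert (K : (fun x => -1 * H x) t <= (fun x => -1 * H x) 0).
  { apply (const_le (fun x => -1 * H x)); [|exact Tt]. intros s Ts.
    replace 0 with (-1 * 0) by ring. apply dd_scal. apply Hd; exact Ts. }
  simpl in K. lra.
Qed.

Definition taylor_term (c t : R) (j : nat) : R := (c * t) ^ j / INR (fact j).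

(** Convexity of [x ^ (j+1)]: the tangent at [x] lies below the graph. *)
Lemma pow_tangent_below j x y : 0 <= x <= y ->
  INR (S j) * x ^ j * (y - x) <= y ^ S j - x ^ S j.
Proof.
  intros [Hx Hxy]. induction j as [|j IH].
  - simpl. lra.
  - assert (Hxj : 0 <= x ^ j) by (apply pow_le; lra).
    change (y ^ S (S j)) with (y * y ^ S j). change (x ^ S (S j)) with (x * x ^ S j).
    rewrite (S_INR (S j)).
    replace (y * y ^ S j - x * x ^ S j)
      with (y * (y ^ S j - x ^ S j) + x ^ S j * (y - x)) by ring.
    assert (0 <= INR (S j)) by apply pos_INR.
    assert (y * (INR (S j) * x ^ j * (y - x)) <= y * (y ^ S j - x ^ S j))
      by (apply Rmult_le_compat_l; lra).
    assert (x * (INR (S j) * x ^ j * (y - x)) <= y * (INR (S j) * x ^ j * (y - x))).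
    { apply Rmult_le_compat_r; [|lra]. apply Rmult_le_pos; [apply Rmult_le_pos|]; lra. }
    change (x ^ S j) with (x * x ^ j) in *. nra.
Qed.

Lemma taylor_term_nonneg c t j : 0 <= c -> 0 <= t -> 0 <= taylor_term c t j.
Proof.
  intros. unfold taylor_term. apply Rmult_le_pos; [apply pow_le; nra|].
  apply Rlt_le, Rinv_0_lt_compat, INR_fact_lt_0.
Qed.

(** [c h_j] is a lower bound for the slopes of [h_(j+1)] to the right of [t]:
    the discrete form of [h_(j+1)' = c h_j]. *)
Lemma taylor_term_slope c t s j : 0 < c -> 0 <= t <= s ->
  c * (s - t) * taylor_term c t j <= taylor_term c s (S j) - taylor_term c t (S j).
Proof.
  intros Hc Hts. unfold taylor_term.
  rewrite fact_simpl, mult_INR.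
  pose proof (INR_fact_lt_0 j) as F0.
  assert (HS : 0 < INR (S j)) by (apply lt_0_INR; lia).
  replace ((c * s) ^ S j / (INR (S j) * INR (fact j)) - (c * t) ^ S j / (INR (S j) * INR (fact j)))
    with (((c * s) ^ S j - (c * t) ^ S j) / (INR (S j) * INR (fact j))) by (field; lra).
  replace (c * (s - t) * ((c * t) ^ j / INR (fact j)))
    with ((INR (S j) * (c * t) ^ j * (c * s - c * t)) / (INR (S j) * INR (fact j)))
    by (field; lra).
  unfold Rdiv. apply Rmult_le_compat_r.
  - apply Rlt_le, Rinv_0_lt_compat. nra.
  - apply pow_tangent_below. nra.
Qed.

Variable c : R.
Hypothesis Hc : 0 < c.
(** Condition (TS1) for the rate [c]: every jump is shorter than [1 / c]. *)
Hypothesis HTS : forall t, T t -> 0 < 1 - c * (sigma T t - t).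

(** One step of the Picard-type iteration for [w^Delta = - c (w - w')],
    [w 0 = 0]: a bound [w' <= B h_j] on [[0, T0]] gives [w <= B h_(j+1)]. *)
Lemma iterate_upper w wd w' B j T0 : 0 <= B ->
  (forall t, T t -> delta_deriv T w t (wd t)) ->
  (forall t, T t -> wd t = - (c * (w t - w' t))) -> w 0 = 0 ->
  (forall t, T t -> t <= T0 -> w' t <= B * taylor_term c t j) ->
  forall t, T t -> t <= T0 -> w t <= B * taylor_term c t (S j).
Proof.
  intros HB Hd Heq Hw0 Hw' t Tt Ht.
  pose proof HT as [_ [_ [Hpos _]]].
  apply Rle_plus_epsilon. intros eps Heps.
  apply (barrier T HT w wd (fun s => B * taylor_term c s (S j) + eps) T0 Hd);
    try assumption.
  - intros s _. unfold taylor_term. reg.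
  - rewrite Hw0. unfold taylor_term. rewrite Rmult_0_r, pow_i by lia.
    unfold Rdiv. rewrite Rmult_0_l, Rmult_0_r. lra.
  - (* jump: [w (sigma s)] is a convex combination of [w s] and [w' s] *)
    intros s Ts Hlt Hle Hws.
    rewrite (dd_scattered T w s (wd s) Ts (Hd s Ts) Hlt), (Heq s Ts).
    pose proof (HTS s Ts). pose proof (Hpos s Ts) as Hs0.
    pose proof (Hw' s Ts ltac:(lra)) as Hb.
    pose proof (taylor_term_slope c s (sigma T s) j Hc ltac:(lra)) as Hslope.
    pose proof (taylor_term_nonneg c s (S j) (Rlt_le _ _ Hc) Hs0).
    set (m := sigma T s - s) in *. assert (Hcm : 0 < c * m) by (unfold m; nra).
    set (G := B * taylor_term c s (S j) + eps) in *.
    replace (w s + m * - (c * (w s - w' s))) with ((1 - c * m) * w s + c * m * w' s) by ring.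
    assert ((1 - c * m) * w s <= (1 - c * m) * G) by (apply Rmult_le_compat_l; lra).
    assert (c * m * w' s <= c * m * (B * taylor_term c s j)) by (apply Rmult_le_compat_l; lra).
    assert (0 <= c * m * G) by (unfold G; apply Rmult_le_pos; nra).
    assert (B * (c * m * taylor_term c s j)
            <= B * (taylor_term c (sigma T s) (S j) - taylor_term c s (S j)))
      by (apply Rmult_le_compat_l; assumption).
    unfold G in *. nra.
  - (* right-dense contact: the slope [c B h_j] of the barrier beats [wd s] *)
    intros s Ts _ Hlt Hws.
    pose proof (Hpos s Ts) as Hs0.
    pose proof (Hw' s Ts ltac:(lra)) as Hb.
    pose proof (taylor_term_nonneg c s (S j) (Rlt_le _ _ Hc) Hs0).
    exists (c * (B * taylor_term c s j)). split.
    + rewrite (Heq s Ts), Hws.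
      assert (c * w' s <= c * (B * taylor_term c s j)) by (apply Rmult_le_compat_l; lra).
      assert (0 < c * (B * taylor_term c s (S j) + eps)) by (apply Rmult_lt_0_compat; nra).
      lra.
    + exists 1. split; [lra|]. intros r Hr.
      pose proof (taylor_term_slope c s r j Hc ltac:(lra)).
      assert (B * (c * (r - s) * taylor_term c s j)
              <= B * (taylor_term c r (S j) - taylor_term c s (S j)))
        by (apply Rmult_le_compat_l; lra).
      nra.
Qed.

Lemma iterate_bound w wd w' B j T0 : 0 <= B ->
  (forall t, T t -> delta_deriv T w t (wd t)) ->
  (forall t, T t -> wd t = - (c * (w t - w' t))) -> w 0 = 0 ->
  (forall t, T t -> t <= T0 -> Rabs (w' t) <= B * taylor_term c t j) ->
  forall t, T t -> t <= T0 -> Rabs (w t) <= B * taylor_term c t (S j).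
Proof.
  intros HB Hd Heq Hw0 Hw' t Tt Ht. apply Rabs_le. split.
  - assert (K : (fun x => -1 * w x) t <= B * taylor_term c t (S j)).
    { apply (iterate_upper (fun x => -1 * w x) (fun x => -1 * wd x)
               (fun x => -1 * w' x) B j T0); try assumption.
      - intros s Ts. apply dd_scal. apply Hd; exact Ts.
      - intros s Ts. rewrite (Heq s Ts). ring.
      - rewrite Hw0. ring.
      - intros s Ts Hs. pose proof (Hw' s Ts Hs).
        pose proof (Rle_abs (- w' s)) as K. rewrite Rabs_Ropp in K. lra. }
    simpl in K. lra.
  - apply (iterate_upper w wd w' B j T0); try assumption.
    intros s Ts Hs. pose proof (Hw' s Ts Hs). pose proof (Rle_abs (w' s)). lra.
Qed.

End ComparisonConsequences.

(** ** The lattice points to the left of the source stay at rest *)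

Lemma dominated_by_taylor_terms x B c t : 0 <= B ->
  (forall j, Rabs x <= B * taylor_term c t j) -> x = 0.
Proof.
  intros HB Hdom. apply NNPP. intro Hx.
  assert (Hax : 0 < Rabs x) by (apply Rabs_pos_lt; exact Hx).
  destruct (cv_speed_pow_fact (c * t) (Rabs x / (B + 1))) as [N HN].
  { apply Rdiv_lt_0_compat; lra. }
  specialize (HN N (le_n N)). unfold R_dist in HN. rewrite Rminus_0_r in HN.
  pose proof (Hdom N) as K. unfold taylor_term in K.
  pose proof (Rle_abs ((c * t) ^ N / INR (fact N))).
  assert (B * ((c * t) ^ N / INR (fact N)) <= B * (Rabs x / (B + 1)))
    by (apply Rmult_le_compat_l; lra).
  assert (B * (Rabs x / (B + 1)) < Rabs x).
  { replace (B * (Rabs x / (B + 1))) with (Rabs x * (B / (B + 1))) by (field; lra).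
    pose proof (frac_lt1 B HB). nra. }
  lra.
Qed.

Section UpwindScheme.

Variable T : R -> Prop.
Hypothesis HT : time_scale0 T.
Variable c : R.
Hypothesis Hc : 0 < c.
Hypothesis HTS : forall t, T t -> 0 < 1 - c * (sigma T t - t).

Variables u ud : Z -> R -> R.
Hypothesis Hd : forall n t, T t -> delta_deriv T (u n) t (ud n t).
Hypothesis Heq : forall n t, T t -> ud n t = - (c * (u n t - u (n - 1)%Z t)).

(** Zero initial data to the left of the source and local boundedness force
    [u_n = 0] for [n < 0]: on [[0, T0]] the bound [B] improves by induction to
    [B (c t)^j / j!] for every [j]. *)
Lemma lower_indices_vanish :
  (forall n, (n <= -1)%Z -> u n 0 = 0) ->
  (forall T0, 0 < T0 -> exists B, forall n t, T t -> t <= T0 -> Rabs (u n t) <= B) ->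
  forall n, (n <= -1)%Z -> forall t, T t -> u n t = 0.
Proof.
  intros Hinit Hbd n Hn t Tt.
  pose proof HT as [_ [T0 [Hpos _]]].
  pose proof (Hpos t Tt) as Ht0.
  destruct (Hbd (t + 1)) as [B HB]; [lra|].
  assert (HB0 : 0 <= B).
  { pose proof (HB 0%Z 0 T0 ltac:(lra)). pose proof (Rabs_pos (u 0%Z 0)). lra. }
  assert (Hiter : forall j n, (n <= -1)%Z -> forall s, T s -> s <= t + 1 ->
            Rabs (u n s) <= B * taylor_term c s j).
  { induction j as [|j IH]; intros m Hm s Ts Hs.
    - unfold taylor_term. simpl. replace (B * (1 / 1)) with B by field. apply HB; assumption.
    - apply (iterate_bound T HT c Hc HTS (u m) (ud m) (u (m - 1)%Z) B j (t + 1));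
        try assumption.
      + intros r Tr. apply Hd; exact Tr.
      + intros r Tr. apply Heq; exact Tr.
      + apply Hinit. exact Hm.
      + intros r Tr Hr. apply IH; [lia | exact Tr | exact Hr]. }
  apply (dominated_by_taylor_terms (u n t) B c t HB0).
  intro j. apply Hiter; [exact Hn | exact Tt | lra].
Qed.

End UpwindScheme.

(** ** Decay of [v^Delta = - c v] *)

Definition decay_profile (a c t : R) : R := a / (1 + c / 2 * t).

(** Across a jump of length [m] the explicit Euler step loses against the
    profile: [(1 - c m) P(s) <= P(s + m)]. *)
Lemma decay_profile_jump a c s m : 0 < a -> 0 < c -> 0 <= s -> 0 < m ->
  (1 - c * m) * decay_profile a c s <= decay_profile a c (s + m).
Proof.
  intros Ha Hc Hs Hm. unfold decay_profile.
  set (p := 1 + c / 2 * s). assert (Hp : 1 <= p) by (unfold p; nra).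
  replace (1 + c / 2 * (s + m)) with (p + c / 2 * m) by (unfold p; ring).
  assert (Hcm : 0 < c * m) by nra.
  assert (E : a / (p + c / 2 * m) - (1 - c * m) * (a / p)
              = a * (c * m * (p - / 2) + (c * m) * (c * m) / 2) * / (p * (p + c / 2 * m)))
    by (field; nra).
  assert (0 <= a * (c * m * (p - / 2) + (c * m) * (c * m) / 2) * / (p * (p + c / 2 * m))).
  { apply Rmult_le_pos; [apply Rmult_le_pos; [lra | nra] |].
    apply Rlt_le, Rinv_0_lt_compat. nra. }
  lra.
Qed.

(** The profile lies above its tangent at [s], of slope [- (a c / 2) / p^2]
    with [p = 1 + c s / 2]. *)
Lemma decay_profile_convex a c s r : 0 < a -> 0 < c -> 0 <= s <= r ->
  - (a * (c / 2)) / (1 + c / 2 * s) ^ 2 * (r - s)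
    <= decay_profile a c r - decay_profile a c s.
Proof.
  intros Ha Hc [Hs Hsr]. unfold decay_profile.
  set (p := 1 + c / 2 * s). assert (Hp : 1 <= p) by (unfold p; nra).
  assert (Hq : p <= 1 + c / 2 * r) by (unfold p; nra).
  assert (E : a / (1 + c / 2 * r) - a / p - - (a * (c / 2)) / p ^ 2 * (r - s)
              = a * (c / 2) * (c / 2) * ((r - s) * (r - s)) / (p * p * (1 + c / 2 * r)))
    by (unfold p; field; split; nra).
  assert (0 <= a * (c / 2) * (c / 2) * ((r - s) * (r - s)) / (p * p * (1 + c / 2 * r))).
  { apply Rmult_le_pos; [|apply Rlt_le, Rinv_0_lt_compat; nra].
    apply Rmult_le_pos; [|nra]. apply Rmult_le_pos; nra. }
  lra.
Qed.

(** That tangent slope is strictly larger than [- c P(s)]: the profile is a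
    strict supersolution of [v' = - c v]. *)
Lemma decay_profile_super a c s : 0 < a -> 0 < c -> 0 <= s ->
  - (c * decay_profile a c s) < - (a * (c / 2)) / (1 + c / 2 * s) ^ 2.
Proof.
  intros Ha Hc Hs. unfold decay_profile.
  set (p := 1 + c / 2 * s). assert (Hp : 1 <= p) by (unfold p; nra).
  assert (E : - (a * (c / 2)) / p ^ 2 - - (c * (a / p)) = a * c * (2 * p - 1) / (2 * p ^ 2))
    by (field; lra).
  assert (0 < a * c * (2 * p - 1) / (2 * p ^ 2)).
  { apply Rdiv_lt_0_compat; [apply Rmult_lt_0_compat; nra | nra]. }
  lra.
Qed.

Section Decay.

Variable T : R -> Prop.
Hypothesis HT : time_scale0 T.
Variable c : R.
Hypothesis Hc : 0 < c.
Hypothesis HTS : forall t, T t -> 0 < 1 - c * (sigma T t - t).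

Variables v dv : R -> R.
Hypothesis Hdv : forall t, T t -> delta_deriv T v t (dv t).
Hypothesis Hv : forall t, T t -> dv t = - (c * v t).

Lemma decay_jump t : T t -> t < sigma T t ->
  v (sigma T t) = (1 - c * (sigma T t - t)) * v t.
Proof.
  intros Tt Hlt. rewrite (dd_scattered T v t (dv t) Tt (Hdv t Tt) Hlt), (Hv t Tt). ring.
Qed.

Lemma decay_nonneg : 0 <= v 0 -> forall t, T t -> 0 <= v t.
Proof.
  intros H0 t Tt. apply Rle_plus_epsilon. intros eps Heps.
  assert (K : (fun x => -1 * v x) t <= (fun _ => eps) t).
  { apply (barrier T HT (fun x => -1 * v x) (fun x => -1 * dv x) (fun _ => eps) t);
      try assumption.
    - intros s Ts. apply dd_scal. apply Hdv; exact Ts.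
    - intros s _. reg.
    - lra.
    - intros s Ts Hlt _ Hs. rewrite (decay_jump s Ts Hlt).
      pose proof (HTS s Ts).
      assert (Hsig : 0 <= c * (sigma T s - s)) by (pose proof (sigma_ge T HT s); nra).
      assert ((1 - c * (sigma T s - s)) * (-1 * v s)
              <= (1 - c * (sigma T s - s)) * eps) by (apply Rmult_le_compat_l; lra).
      nra.
    - intros s Ts _ _ Hs. exists 0. split.
      + rewrite (Hv s Ts). nra.
      + exists 1. split; [lra|]. intros r _. lra.
    - lra. }
  simpl in K. lra.
Qed.

Lemma decay_upper a : 0 < a -> v 0 <= a -> forall t, T t -> v t <= decay_profile a c t.
Proof.
  intros Ha H0 t Tt.
  pose proof HT as [_ [_ [Hpos _]]].
  apply (barrier T HT v dv (decay_profile a c) t Hdv); try assumption.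
  - intros s Ts. pose proof (Hpos s Ts). unfold decay_profile. reg. nra.
  - unfold decay_profile. replace (1 + c / 2 * 0) with 1 by ring. lra.
  - intros s Ts Hlt _ Hs. rewrite (decay_jump s Ts Hlt).
    pose proof (HTS s Ts).
    replace (sigma T s) with (s + (sigma T s - s)) at 2 by ring.
    eapply Rle_trans; [|apply decay_profile_jump; [exact Ha | exact Hc | apply Hpos; exact Ts | lra]].
    apply Rmult_le_compat_l; lra.
  - intros s Ts _ _ Hs. pose proof (Hpos s Ts).
    exists (- (a * (c / 2)) / (1 + c / 2 * s) ^ 2). split.
    + rewrite (Hv s Ts), Hs. apply decay_profile_super; assumption.
    + exists 1. split; [lra|]. intros r Hr. apply decay_profile_convex; [exact Ha | exact Hc | lra].
  - lra.
Qed.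

Lemma decay_to_zero : 0 < v 0 -> lim_infty_T T v 0.
Proof.
  intros H0 eps Heps.
  pose proof HT as [_ [_ [Hpos _]]].
  exists (2 * v 0 / (c * eps)). intros t Tt Ht.
  pose proof (decay_nonneg (Rlt_le _ _ H0) t Tt).
  pose proof (decay_upper (v 0) H0 (Rle_refl _) t Tt). pose proof (Hpos t Tt).
  unfold decay_profile in *.
  rewrite Rminus_0_r, Rabs_right by lra.
  assert (Hce : 0 < c * eps) by nra.
  assert (2 * v 0 < c * eps * t).
  { apply (Rmult_lt_compat_l (c * eps)) in Ht; [|lra].
    replace (c * eps * (2 * v 0 / (c * eps))) with (2 * v 0) in Ht by (field; lra). lra. }
  assert (v 0 / (1 + c / 2 * t) < eps).
  { apply (Rmult_lt_reg_r (1 + c / 2 * t)); [nra|].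
    replace (v 0 / (1 + c / 2 * t) * (1 + c / 2 * t)) with (v 0) by (field; nra). nra. }
  lra.
Qed.

(** [- v / c] is an antiderivative of [v]; every other one differs from it
    by a constant, so [F b - F 0 = (v 0 - v b) / c -> v 0 / c]. *)
Lemma decay_integral : lim_infty_T T v 0 -> delta_integral_0_infty T v (v 0 / c).
Proof.
  intros Hlim.
  set (F0 := fun x => - / c * v x).
  assert (HF0 : delta_antiderivative T F0 v).
  { intros t Tt. pose proof (dd_scal T v t (dv t) (- / c) (Hdv t Tt)) as K.
    replace (- / c * dv t) with (v t) in K by (rewrite (Hv t Tt); field; lra).
    exact K. }
  split; [exists F0; exact HF0|].
  intros F HF.
  assert (Hconst : forall t, T t -> F t - F0 t = F 0 - F0 0).
  { apply (const_eq T HT (fun x => F x - F0 x)). intros t Tt.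
    replace 0 with (v t - v t) by ring. apply dd_minus; [apply HF | apply HF0]; exact Tt. }
  intros eps Heps.
  destruct (Hlim (eps * c)) as [M HM]; [nra|].
  exists M. intros b Tb Hb.
  specialize (HM b Tb Hb). rewrite Rminus_0_r in HM.
  pose proof (Hconst b Tb) as E. unfold F0 in E.
  replace (F b - F 0 - v 0 / c) with (- / c * v b)
    by (unfold Rdiv; rewrite (Rmult_comm (v 0)); lra).
  rewrite Rabs_mult, Rabs_Ropp, Rabs_right by (apply Rle_ge, Rlt_le, Rinv_0_lt_compat; lra).
  apply (Rmult_lt_reg_l c); [lra|]. rewrite <- Rmult_assoc, Rinv_r by lra. lra.
Qed.

End Decay.

Lemma TS1_rate T k mux : 0 < mux -> TS1 T k mux ->
  forall t, T t -> 0 < 1 - k / mux * (sigma T t - t).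
Proof.
  intros Hmux HTS1 t Tt. specialize (HTS1 t Tt). unfold mu_t in HTS1.
  replace (k / mux * (sigma T t - t)) with (k * (sigma T t - t) / mux) by (field; lra).
  lra.
Qed.

Theorem mainTheorem7 (T : R -> Prop) (A k mux : R) (u : Z -> R -> R)
  (HT : time_scale0 T) (HA : 0 < A) (Hk : 0 < k) (Hmux : 0 < mux)
  (HTS1 : TS1 T k mux) (Hu : solves_P T A k mux u) :
  lim_infty_T T (fun t => u 0%Z t) 0 /\
  delta_integral_0_infty T (fun t => u 0%Z t) (A * mux / k).
Proof.
  destruct Hu as [[ud Hud] [Hu0 [Hinit Hbd]]].
  set (c := k / mux).
  assert (Hc : 0 < c) by (unfold c; apply Rdiv_lt_0_compat; lra).
  pose proof (TS1_rate T k mux Hmux HTS1) as HTS.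
  assert (Hd : forall n t, T t -> delta_deriv T (u n) t (ud n t))
    by (intros; apply Hud; assumption).
  assert (Heq : forall n t, T t -> ud n t = - (c * (u n t - u (n - 1)%Z t))).
  { intros n t Tt. pose proof (proj2 (Hud n t Tt)). unfold c.
    replace (- (k / mux * (u n t - u (n - 1)%Z t)))
      with (- (k * (u n t - u (n - 1)%Z t) / mux)) by (field; lra).
    lra. }
  (* the lattice point left of the source stays at rest, so [u_0' = - c u_0] *)
  assert (Hv : forall t, T t -> ud 0%Z t = - (c * u 0%Z t)).
  { intros t Tt. rewrite (Heq 0%Z t Tt).
    rewrite (lower_indices_vanish T HT c Hc HTS u ud Hd Heq
               (fun n Hn => Hinit n ltac:(lia)) Hbd (0 - 1)%Z ltac:(lia) t Tt).
    ring. }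
  assert (Hlim : lim_infty_T T (u 0%Z) 0)
    by exact (decay_to_zero T HT c Hc HTS (u 0%Z) (ud 0%Z) (Hd 0%Z) Hv ltac:(lra)).
  split; [exact Hlim|].
  replace (A * mux / k) with (u 0%Z 0 / c) by (rewrite Hu0; unfold c; field; lra).
  exact (decay_integral T HT c Hc (u 0%Z) (ud 0%Z) (Hd 0%Z) Hv Hlim).
Qed.
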